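(* For all $T\in\mathcal{T}_H$ and all $j\in\{2,\dots,N\}$ it holds $\mathcal{P}_Hb_{j,T}=b_{j,T}$.
   Context: $\mathcal{T}_H$ is a quasi-uniform non-degenerate quadrilateral mesh of a polygonal Lipschitz domain $D\subset\mathbb{R}^d$, mesh size $H$. For fixed $p\in\mathbb{N}_0$, $\mathcal{V}_H$ is the space of elementwise polynomials of coordinate degree $\le p$, $\Pi_H$ the elementwise $L^2$-projection onto $\mathcal{V}_H$, and $\{\Lambda_{j,T}\}_{j=1}^N$, $N=(p+1)^d$, the $L^2(T)$-orthonormal shifted tensor-product Legendre basis on $T$, with $\Lambda_{1,T}$ the constant function. For each $T,j$, $b_{j,T}\in H^1_0(T)$ (extended by zero) satisfies $\Pi_Hb_{j,T}=\Lambda_{j,T}$. $\mathcal{B}_Hv:=\sum_T\sum_j(\int_Tv\Lambda_{j,T}dx)b_{j,T}$. $\Pi_H^0$ is the $L^2$-projection onto piecewise constants; $\mathcal{E}_H$ maps a piecewise constant function to the continuous piecewise bilinear function whose value at an interior node is the average of the adjacent elementwise values and which vanishes at boundary nodes; $\mathcal{I}_H:=\mathcal{E}_H\circ\Pi_H^0$ and $\mathcal{P}_Hv:=\mathcal{I}_Hv+\mathcal{B}_H(v-\mathcal{I}_Hv)$. *)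

From HB Require Import structures.
From mathcomp Require Import all_boot all_order all_algebra.
From mathcomp Require Import all_classical all_reals all_analysis.
Set Implicit Arguments. Unset Strict Implicit. Unset Printing Implicit Defensive.
Import Order.TTheory GRing.Theory Num.Theory.
Import numFieldNormedType.Exports.
Local Open Scope classical_set_scope.
Local Open Scope ring_scope.

Section Defs.
Variables (R : realType) (d p : nat).

Definition point := 'rV[R]_d.

(** Legendre polynomials on [-1,1] via the three-term recurrence:
    leg_pair n t = (P_n t, P_(n+1) t). *)
Fixpoint leg_pair (n : nat) (t : R) : R * R :=
  match n with
  | 0 => (1, t)
  | m.+1 => let (a, b) := leg_pair m t in
            (b, ((2 * m + 3)%:R * t * b - m.+1%:R * a) / (m.+2)%:R)
  end.
Definition legendre (n : nat) (t : R) : R := (leg_pair n t).1.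

(** Shifted Legendre polynomial on [a,b], normalised in L^2(a,b). *)
Definition sleg (n : nat) (a b t : R) : R :=
  Num.sqrt ((2 * n + 1)%:R / (b - a)) * legendre n ((2 * t - a - b) / (b - a)).

(** Multi-indices (tensor-product degrees, coordinate degree <= p). *)
Definition multi := {ffun 'I_d -> 'I_p.+1}.
(** The multi-index of the constant basis function (j = 1 in the paper). *)
Definition alpha0 : multi := [ffun => ord0].

(** Elements of the mesh: axis-parallel boxes prod_k [lo T k, hi T k]. *)
Variables (E : finType) (lo hi : E -> 'I_d -> R).

Definition inbox (T : E) (x : point) : bool :=
  [forall k, (lo T k <= x ord0 k) && (x ord0 k <= hi T k)].
Definition boxset (T : E) : set point := [set x | inbox T x].
Definition openbox (T : E) : set point :=
  [set x | forall k, lo T k < x ord0 k < hi T k].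
Definition vertex (T : E) (s : {ffun 'I_d -> bool}) : point :=
  \row_k (if s k then hi T k else lo T k).

Definition Dom : set point := interior (\bigcup_(T in [set: E]) boxset T).

Definition Lam (T : E) (a : multi) (x : point) : R :=
  \prod_(k < d) sleg (a k) (lo T k) (hi T k) (x ord0 k).

Definition setc (x : point) (k : 'I_d) (t : R) : point :=
  \row_i (if i == k then t else x ord0 i).
Fixpoint iint (ks : seq 'I_d) (T : E) (f : point -> R) (x : point) : R :=
  match ks with
  | [::] => f x
  | k :: ks' => Rintegral (@lebesgue_measure R) `[lo T k, hi T k]%classic
                  (fun t => iint ks' T f (setc x k t))
  end.
Definition boxint (T : E) (f : point -> R) : R := iint (enum 'I_d) T f 0.

Definition broken := E -> point -> R.

(** Pi_H : elementwise L^2 projection onto Q_p (via the ONB Lambda). *)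
Definition PiH (v : point -> R) : broken :=
  fun T x => \sum_(a : multi) boxint T (fun y => v y * Lam T a y) * Lam T a x.

(** Pi_H^0 : elementwise L^2 projection onto constants (via Lambda_{1,T}). *)
Definition Pi0 (v : point -> R) : broken :=
  fun T x => boxint T (fun y => v y * Lam T alpha0 y) * Lam T alpha0 x.

(** E_H : nodal averaging into continuous piecewise (multi)linear functions,
    zero at boundary nodes. *)
Definition nodeval (f : broken) (z : point) : R :=
  if `[< Dom z >] then
    (\sum_(T | inbox T z) f T z) / (#|[set T | inbox T z]|)%:R
  else 0.
Definition lam (T : E) (s : {ffun 'I_d -> bool}) (k : 'I_d) (x : point) : R :=
  if s k then (x ord0 k - lo T k) / (hi T k - lo T k)
  else (hi T k - x ord0 k) / (hi T k - lo T k).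
Definition EH (f : broken) : point -> R :=
  fun x => match [pick T | inbox T x] with
           | Some T => \sum_(s : {ffun 'I_d -> bool})
                         nodeval f (vertex T s) * \prod_(k < d) lam T s k x
           | None => 0
           end.

Definition IH (v : point -> R) : point -> R := EH (Pi0 v).

(** B_H, given the bubbles b T a (extended by zero). *)
Definition BH (b : E -> multi -> point -> R) (v : point -> R) : point -> R :=
  fun x => \sum_(T : E) \sum_(a : multi)
             boxint T (fun y => v y * Lam T a y) * b T a x.

Definition PH (b : E -> multi -> point -> R) (v : point -> R) : point -> R :=
  fun x => IH v x + BH b (fun y => v y - IH v y) x.

End Defs.

From HB Require Import structures.
From mathcomp Require Import all_boot all_order all_algebra.
From mathcomp Require Import all_classical all_reals all_analysis.
From mathcomp Require Import lra.
Import Order.TTheory GRing.Theory Num.Theory.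
Set Implicit Arguments. Unset Strict Implicit. Unset Printing Implicit Defensive.
Local Open Scope classical_set_scope.
Local Open Scope ring_scope.

(* Since Pi_H b_{j,T} = Lambda_{j,T} elementwise and the Lambda_{j',T'} are
   linearly independent on T', the moments of b_{j,T} against Lambda_{j',T'}
   form the Kronecker delta in (j,T), (j',T').  The independence comes from a
   dual basis of point evaluations on a tensor grid, which exists because the
   Legendre polynomials of degrees 0..p are a basis of P_p.  For j >= 2 the
   mean values of b_{j,T} vanish, so Pi_H^0 b_{j,T} = 0, hence I_H b_{j,T} = 0
   and P_H b_{j,T} = B_H b_{j,T} = b_{j,T}. *)

Section GradedPolynomials.
Variables (R : fieldType) (q : nat -> {poly R}).
Hypothesis size_q : forall n, size (q n) = n.+1.

Lemma size_graded_sum m (u : nat -> R) : (size (\sum_(n < m) u n *: q n)%R <= m)%N.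
Proof.
apply: (big_ind (fun r : {poly R} => size r <= m)%N) => [|r s ler les|n _].
- by rewrite size_poly0.
- by rewrite (leq_trans (size_polyD _ _)) // geq_max ler les.
- by rewrite (leq_trans (size_scale_leq _ _)) // size_q.
Qed.

Lemma graded_sum_eq0 m (u : nat -> R) :
  \sum_(n < m) u n *: q n = 0 -> forall n, (n < m)%N -> u n = 0.
Proof.
elim: m => [//|m IHm]; rewrite big_ord_recr /= => sum0.
have um0 : u m = 0.
  have := congr1 (fun r : {poly R} => r`_m) sum0.
  rewrite coefD coefZ coef0 (nth_default _ (size_graded_sum m u)) add0r.
  have -> : (q m)`_m = lead_coef (q m) by rewrite /lead_coef size_q.
  by move/eqP; rewrite mulf_eq0 lead_coef_eq0 -size_poly_eq0 size_q orbF => /eqP.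
move: sum0; rewrite um0 scale0r addr0 => /IHm um'0 n.
by rewrite ltnS leq_eqVlt => /predU1P [-> | /um'0].
Qed.

Lemma graded_interp_unitmx p (s : 'I_p.+1 -> R) :
  injective s -> \matrix_(n, i) (q n).[s i] \in unitmx.
Proof.
move=> s_inj; rewrite unitmxE unitfE; apply/det0P => -[v v_neq0 vA0].
pose u n := v ord0 (inord n); pose Q := \sum_(n < p.+1) u n *: q n.
have Q_roots : all (root Q) [seq s i | i <- enum 'I_p.+1].
  apply/allP => _ /mapP [i _ ->]; rewrite /root horner_sum; apply/eqP.
  have := congr1 (fun M : 'rV_p.+1 => M ord0 i) vA0; rewrite !mxE.
  by apply: etrans; apply: eq_bigr => n _; rewrite hornerZ /u inord_val mxE.
have Q0 : Q = 0.
  apply/eqP; apply: contraT => Q_neq0.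
  have := max_poly_roots Q_neq0 Q_roots; rewrite map_inj_uniq ?enum_uniq //.
  by rewrite size_map size_enum_ord ltnNge (size_graded_sum _ u) => /(_ isT).
move/negP: v_neq0; apply; apply/eqP/rowP => n; rewrite mxE.
by have := graded_sum_eq0 (u := u) Q0 (ltn_ord n); rewrite /u inord_val.
Qed.

End GradedPolynomials.

Section Legendre.
Variable R : realType.

Fixpoint legendre_poly_pair (n : nat) : {poly R} * {poly R} :=
  match n with
  | 0 => (1, 'X)
  | m.+1 => let (a, b) := legendre_poly_pair m in
            (b, (m.+2%:R)^-1 *: ((2 * m + 3)%:R *: ('X * b) - m.+1%:R *: a))
  end.

Definition legendre_poly n := (legendre_poly_pair n).1.

Lemma horner_legendre_poly_pair n (t : R) :
  ((legendre_poly_pair n).1.[t], (legendre_poly_pair n).2.[t]) = leg_pair n t.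
Proof.
elim: n => [|n] /=; first by rewrite hornerC hornerX.
case: (legendre_poly_pair n) (leg_pair n t) => a b [a' b'] /= [<- <-].
by rewrite !hornerE [_^-1 * _]mulrC.
Qed.

Lemma size_legendre_poly_pair n :
  (size (legendre_poly_pair n).1, size (legendre_poly_pair n).2) = (n.+1, n.+2).
Proof.
elim: n => [|n] /=; first by rewrite size_poly1 size_polyX.
case: (legendre_poly_pair n) => a b [size_a size_b] /=; rewrite size_b.
have b_neq0 : b != 0 by rewrite -size_poly_eq0 size_b.
rewrite size_scale ?invr_eq0 ?pnatr_eq0 // size_polyDl.
  by rewrite size_scale ?pnatr_eq0 ?addn3 // mulrC size_mulX // size_b.
rewrite size_polyN (leq_ltn_trans (size_scale_leq _ _)) // size_a.
by rewrite size_scale ?pnatr_eq0 ?addn3 // mulrC size_mulX // size_b.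
Qed.

Definition sleg_arg (lo hi t : R) : R := (2 * t - lo - hi) / (hi - lo).

Definition sleg_poly n (lo hi : R) : {poly R} :=
  Num.sqrt ((2 * n + 1)%:R / (hi - lo)) *: legendre_poly n.

Lemma sleg_horner n lo hi t : sleg n lo hi t = (sleg_poly n lo hi).[sleg_arg lo hi t].
Proof.
rewrite /sleg /legendre hornerZ; congr (_ * _).
by rewrite -(horner_legendre_poly_pair n).
Qed.

Variables (lo hi : R).
Hypothesis lo_lt_hi : lo < hi.

Lemma size_sleg_poly n : size (sleg_poly n lo hi) = n.+1.
Proof.
rewrite size_scale; first by have [] := size_legendre_poly_pair n.
by rewrite gt_eqF // sqrtr_gt0 divr_gt0 // subr_gt0.
Qed.

Lemma sleg_arg_inj : injective (sleg_arg lo hi).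
Proof.
have hl_neq0 : hi - lo != 0 by rewrite subr_eq0 gt_eqF.
by move=> t t' /(mulIf (invr_neq0 hl_neq0)) eq_tt'; lra.
Qed.

Variable p : nat.

Definition equi_node (i : 'I_p.+1) : R := lo + (hi - lo) * (i%:R / p.+1%:R).

Lemma equi_node_itv i : lo <= equi_node i <= hi.
Proof.
have ge0 : 0 <= (i%:R / p.+1%:R : R) by rewrite divr_ge0 // ler0n.
have le1 : (i%:R / p.+1%:R : R) <= 1 by rewrite ler_pdivrMr ?ltr0n // mul1r ler_nat ltnW.
have hl_ge0 : 0 <= hi - lo by rewrite subr_ge0 ltW.
rewrite /equi_node lerDl mulr_ge0 //= -lerBrDl.
by rewrite -[leRHS]mulr1 ler_wpM2l.
Qed.

Lemma equi_node_inj : injective equi_node.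
Proof.
have hl_neq0 : hi - lo != 0 by rewrite subr_eq0 gt_eqF.
move=> i j /addrI /(mulfI hl_neq0) /(mulIf (invr_neq0 _)).
by rewrite pnatr_eq0 => /(_ isT) /eqP; rewrite eqr_nat => /eqP /val_inj.
Qed.

Definition sleg_mx : 'M[R]_p.+1 := \matrix_(n, i) sleg n lo hi (equi_node i).

Lemma sleg_mx_unit : sleg_mx \in unitmx.
Proof.
have -> : sleg_mx = \matrix_(n, i) (sleg_poly n lo hi).[sleg_arg lo hi (equi_node i)].
  by apply/matrixP => n i; rewrite !mxE sleg_horner.
exact: (graded_interp_unitmx size_sleg_poly) (inj_comp sleg_arg_inj equi_node_inj).
Qed.

Definition sleg_dual (m i : 'I_p.+1) : R := invmx sleg_mx i m.

Lemma sleg_dualP (m n : 'I_p.+1) :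
  \sum_i sleg_dual m i * sleg n lo hi (equi_node i) = (m == n)%:R.
Proof.
have := congr1 (fun M : 'M[R]_p.+1 => M n m) (mulmxV sleg_mx_unit).
rewrite !mxE eq_sym => <-; apply: eq_bigr => i _.
by rewrite !mxE mulrC.
Qed.

End Legendre.

Lemma prod_eq_ffun_nat (R : comPzSemiRingType) (I : finType) (J : eqType)
    (f g : {ffun I -> J}) :
  \prod_i ((f i == g i)%:R : R) = (f == g)%:R.
Proof.
have [-> | fg] := eqVneq f g; first by apply: big1 => i _; rewrite eqxx.
have /existsP [i fgi] : [exists i, f i != g i].
  apply: contraNT fg; rewrite negb_exists => /forallP eq_fg.
  by apply/eqP/ffunP => i; apply/eqP/negPn/eq_fg.
by rewrite (bigD1 i) //= (negPf fgi) mul0r.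
Qed.

Lemma sumr_delta (R : pzSemiRingType) (I : finType) (i0 : I) (F : I -> R) :
  \sum_i (i == i0)%:R * F i = F i0.
Proof.
rewrite (bigD1 i0) //= eqxx mul1r big1 ?addr0 // => i /negPf ->.
exact: mul0r.
Qed.

Section TensorLegendre.
Variables (R : realType) (d p : nat) (E : finType) (lo hi : E -> 'I_d -> R) (T : E).
Hypothesis lo_lt_hi : forall k, lo T k < hi T k.

Definition box_node (nu : multi d p) : 'rV[R]_d :=
  \row_k equi_node (lo T k) (hi T k) (nu k).

Lemma inbox_box_node nu : inbox lo hi T (box_node nu).
Proof. by apply/forallP => k; rewrite mxE equi_node_itv. Qed.

Definition box_dual (m nu : multi d p) : R :=
  \prod_k sleg_dual (lo T k) (hi T k) (m k) (nu k).

Lemma box_dualP m a :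
  \sum_nu box_dual m nu * Lam lo hi T a (box_node nu) = (m == a)%:R.
Proof.
rewrite -prod_eq_ffun_nat.
under eq_bigr => k _ do rewrite -(sleg_dualP (lo_lt_hi k)).
rewrite bigA_distr_bigA; apply: eq_bigr => nu _.
rewrite /box_dual /Lam -big_split; apply: eq_bigr => k _.
by rewrite mxE.
Qed.

Lemma Lam_free (e : multi d p -> R) :
  (forall x, inbox lo hi T x -> \sum_a e a * Lam lo hi T a x = 0) ->
  forall m, e m = 0.
Proof.
move=> e_Lam0 m.
have : \sum_nu box_dual m nu * \sum_a e a * Lam lo hi T a (box_node nu) = 0.
  by rewrite big1 // => nu _; rewrite e_Lam0 ?mulr0 ?inbox_box_node.
under eq_bigr do rewrite mulr_sumr.
rewrite exchange_big /=.
under eq_bigr do rewrite (eq_bigr _ (fun nu _ => mulrCA _ _ _)) -mulr_sumr box_dualP.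
by under eq_bigr do rewrite mulrC eq_sym; rewrite sumr_delta.
Qed.

End TensorLegendre.

Section QuasiInterpolation.
Variables (R : realType) (d p : nat) (E : finType) (lo hi : E -> 'I_d -> R).
Variable b : E -> multi d p -> 'rV[R]_d -> R.

Lemma IH_eq0 v :
  (forall T, boxint lo hi T (fun y => v y * Lam lo hi T (alpha0 d p) y) = 0) ->
  forall x, IH p lo hi v x = 0.
Proof.
move=> v_mean0 x; rewrite /IH /EH; case: pickP => // T _; apply: big1 => s _.
rewrite /nodeval; case: ifP => _; last by rewrite mul0r.
by rewrite big1 ?mul0r // => T' _; rewrite /Pi0 v_mean0 mul0r.
Qed.

Lemma BH_biorthogonal v T a :
  (forall T' a', boxint lo hi T' (fun y => v y * Lam lo hi T' a' y) =
                 ((T' == T) && (a' == a))%:R) ->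
  BH lo hi b v = b T a.
Proof.
move=> vK; apply/funext => x; rewrite /BH (bigD1 T) //= (bigD1 a) //= vK !eqxx mul1r.
rewrite big1 ?addr0 => [|a' a'a]; last by rewrite vK eqxx (negPf a'a) mul0r.
rewrite big1 ?addr0 // => T' T'T; apply: big1 => a' _.
by rewrite vK (negPf T'T) mul0r.
Qed.

Hypothesis lo_lt_hi : forall T k, lo T k < hi T k.
Hypothesis PiH_b : forall T a T' x, inbox lo hi T' x ->
  PiH p lo hi (b T a) T' x = (if T' == T then Lam lo hi T a x else 0).

Lemma bubble_moments T a T' a' :
  boxint lo hi T' (fun y => b T a y * Lam lo hi T' a' y) = ((T' == T) && (a' == a))%:R.
Proof.
pose e a'' := boxint lo hi T' (fun y => b T a y * Lam lo hi T' a'' y)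
              - ((T' == T) && (a'' == a))%:R.
apply/eqP; rewrite -subr_eq0; apply/eqP; rewrite -/(e a').
apply: (Lam_free (lo_lt_hi T')) => x x_in.
under eq_bigr do rewrite mulrBl.
have := PiH_b T a x_in; rewrite /PiH sumrB => ->; case: eqP => [-> | _] /=.
- by rewrite sumr_delta subrr.
- by rewrite big1 ?subrr // => a'' _; rewrite mul0r.
Qed.

End QuasiInterpolation.

Unset Implicit Arguments. Set Strict Implicit. Set Printing Implicit Defensive.

Theorem mainTheorem6 (R : realType) (d p : nat) (E : finType)
  (lo hi : E -> 'I_d -> R)
  (* non-degenerate boxes *)
  (Hbox : forall T k, lo T k < hi T k)
  (* elements do not overlap *)
  (Hdisj : forall T T' : E, T != T' -> openbox lo hi T `&` openbox lo hi T' = set0)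
  (* conforming mesh (no hanging nodes) *)
  (Hconf : forall (T T' : E) s, inbox lo hi T' (vertex lo hi T s) ->
             exists s', vertex lo hi T s = vertex lo hi T' s')
  (b : E -> multi d p -> 'rV[R]_d -> R)
  (* b_{a,T} is supported in T (extended by zero) *)
  (Hsupp : forall T a x, ~~ inbox lo hi T x -> b T a x = 0)
  (* Pi_H b_{a,T} = Lambda_{a,T} (elementwise, Lambda_{a,T} extended by 0) *)
  (Hb : forall T a T' x, inbox lo hi T' x ->
          PiH p lo hi (b T a) T' x = (if T' == T then Lam lo hi T a x else 0)) :
  forall (T : E) (a : multi d p), a != alpha0 d p ->
    PH lo hi b (b T a) = b T a.
Proof.
move=> T a a_neq0.
have moments := bubble_moments Hbox Hb T a.
have IH0 : forall x, IH p lo hi (b T a) x = 0.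
  have alpha0_neq_a : alpha0 d p != a by rewrite eq_sym.
  by apply: IH_eq0 => T'; rewrite moments (negPf alpha0_neq_a) andbF.
rewrite /PH.
have -> : (fun y => b T a y - IH p lo hi (b T a) y) = b T a.
  by apply/funext => y; rewrite IH0 subr0.
by apply/funext => x; rewrite IH0 add0r (BH_biorthogonal _ moments).
Qed.
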